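(* In the Standing Setup with $R=-v(X-w)$ ($v,w\in\mathbb F$), for every $h\in\mathbb Z$: $$d_{h-2}d_{h-1}^2d_h^3d_{h+1}^2d_{h+2}=-v^3\bigl((g+d_he_h)+w(f+d_h)+w^3\bigr)=v^2\,d_{h-1}d_h^2d_{h+1}-v^3\,(g+wf+w^3).$$
   Context: Standing Setup. $\mathbb F$ is a field of characteristic not $2$ or $3$; $f,g\in\mathbb F$; $A=X^3+fX+g\in\mathbb F[X]$; $R\in\mathbb F[X]$ is a polynomial of degree at most $2$; $D=A^2+4R$; $Y$ satisfies $Y^2=D(X)$, $Z=\tfrac12(Y+A)$ and $\overline Z=\tfrac12(-Y+A)$, so $Z+\overline Z=A$ and $Z\overline Z=-R$. We are given sequences $(u_h),(v_h),(w_h),(d_h),(e_h)$ of elements of $\mathbb F$ indexed by $h\in\mathbb Z$, with all $u_h\neq0$, such that for every $h\in\mathbb Z$ the following two identities hold in $\mathbb F[X]$: (i) $A+d_h(X+e_h)+d_{h+1}(X+e_{h+1})=(X+v_h)(X^2-v_hX+w_h)$; (ii) $-u_hu_{h+1}(X^2-v_hX+w_h)(X^2-v_{h+1}X+w_{h+1})=d_{h+1}^2(X+e_{h+1})^2+d_{h+1}(X+e_{h+1})A-R$. (These say that $Z_h=\bigl(Z+d_h(X+e_h)\bigr)/\bigl(u_h(X^2-v_hX+w_h)\bigr)$ are consecutive complete quotients of a continued fraction expansion with partial quotients $(X+v_h)/u_h$.) *)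

From HB Require Import structures.
From mathcomp Require Import all_boot all_order all_algebra.
Set Implicit Arguments. Unset Strict Implicit. Unset Printing Implicit Defensive.
Import Order.TTheory GRing.Theory Num.Theory.
Local Open Scope ring_scope.

Definition cubicA (F : fieldType) (f g : F) : {poly F} :=
  'X^3 + f%:P * 'X + g%:P.

Definition ident_i (F : fieldType) (f g : F)
    (vs ws d e : int -> F) (h : int) : Prop :=
  cubicA f g + (d h)%:P * ('X + (e h)%:P) + (d (h + 1))%:P * ('X + (e (h + 1))%:P)
  = ('X + (vs h)%:P) * ('X^2 - (vs h)%:P * 'X + (ws h)%:P).

Definition ident_ii (F : fieldType) (f g : F) (R : {poly F})
    (u vs ws d e : int -> F) (h : int) : Prop :=
  - ((u h) * (u (h + 1)))%:P
      * ('X^2 - (vs h)%:P * 'X + (ws h)%:P)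
      * ('X^2 - (vs (h + 1))%:P * 'X + (ws (h + 1))%:P)
  = (d (h + 1) ^+ 2)%:P * ('X + (e (h + 1))%:P) ^+ 2
    + (d (h + 1))%:P * ('X + (e (h + 1))%:P) * cubicA f g - R.

From HB Require Import structures.
From mathcomp Require Import all_boot all_order all_algebra ring zify.
Set Implicit Arguments. Unset Strict Implicit. Unset Printing Implicit Defensive.
Import Order.TTheory GRing.Theory Num.Theory.
Local Open Scope ring_scope.

(* Write Q_h = X^2 - v_h X + w_h and P_h = d_h (X + e_h).  Substituting (i) in the form
   P_h + A = (X + v_h) Q_h - P_(h+1) into (ii) at h-1 shows that Q_h times
   -u_(h-1) u_h Q_(h-1) - d_h (X + e_h)(X + v_h) has degree at most 2; as Q_h is monic of
   degree 2 that factor is constant, and comparing X^2 coefficients gives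
   -u_(h-1) u_h = d_h, Q_(h-1) = (X + e_h)(X + v_h) - d_(h+1) and
   d_h d_(h+1) ((X + e_h)(X + e_(h+1)) - Q_h) = -R = v (X - w).  Evaluating the last
   identity at w and at -e_h (using the mirror image Q_h = (X + e_h)(X + v_(h-1)) - d_(h-1))
   gives Q_h(w) = (w + e_h)(w + e_(h+1)) and d_(h-1) d_h d_(h+1) = -v (w + e_h), while
   (ii) at X = w, where R vanishes, gives (w + e_(h-1))(w + e_h)(w + e_(h+1))
   = d_h (w + e_h) + A(w).  The left-hand side of the theorem is a product of three
   consecutive triples d_(j-1) d_j d_(j+1). *)

Section MonicQuadratics.
Variable F : fieldType.
Implicit Types (p q : {poly F}) (a b : F).

Lemma monic_coef_size p n : p \is monic -> size p = n.+1 -> p`_n = 1.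
Proof. by move=> /monicP + sz; rewrite /lead_coef sz. Qed.

Lemma size_monicM_le1 p q : q \is monic -> (size (q * p)%R <= size q)%N -> (size p <= 1)%N.
Proof.
move=> q_monic; have [-> | p_neq0] := eqVneq p 0; first by rewrite size_poly0.
have : (0 < size q)%N by rewrite size_poly_gt0 monic_neq0.
rewrite size_monicM //; lia.
Qed.

Lemma coef2_XaddC_mul a b : (('X + a%:P) * ('X + b%:P))`_2 = 1.
Proof.
apply: monic_coef_size; first by rewrite monicMl monicXaddC.
by rewrite size_monicM ?monic_neq0 ?monicXaddC // !size_XaddC.
Qed.

Lemma monic_quadratic a b : 'X^2 - a%:P * 'X + b%:P \is monic.
Proof.
rewrite (_ : 'X^2 - _ + _ = ('X - a%:P) * 'X + b%:P); last by ring.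
rewrite monicE lead_coefDl ?lead_coef_Mmonic ?lead_coefXsubC ?monicX //.
by rewrite size_polyC size_mulX ?polyXsubC_eq0 // size_XsubC; case: (b != 0).
Qed.

Lemma size_CM_XsubC a b : (size (a%:P * ('X - b%:P))%R <= 2)%N.
Proof. by rewrite mul_polyC (leq_trans (size_scale_leq _ _)) // size_XsubC. Qed.

Lemma size_quadratic a b : size ('X^2 - a%:P * 'X + b%:P) = 3.
Proof.
rewrite (_ : 'X^2 - _ + _ = ('X - a%:P) * 'X + b%:P); last by ring.
by rewrite size_MXaddC polyXsubC_eq0 size_XsubC.
Qed.

End MonicQuadratics.

(* Q1 and Q2 stand for consecutive denominators Q_(h-1), Q_h: [norm_eq] is (ii) at h-1
   with S = -R, and [cf_eq] is (i) at h. *)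
Section ConsecutiveNorms.
Variables (F : fieldType) (Q1 Q2 A S : {poly F}) (U D E c D' E' : F).
Hypotheses (Q1_monic : Q1 \is monic) (size_Q1 : size Q1 = 3).
Hypotheses (Q2_monic : Q2 \is monic) (size_Q2 : size Q2 = 3).
Hypothesis size_S : (size S <= 2)%N.

Local Notation P := (D%:P * ('X + E%:P)).
Hypothesis norm_eq : U%:P * (Q1 * Q2) = P * (P + A) + S.
Hypothesis cf_eq : P + A = ('X + c%:P) * Q2 - D'%:P * ('X + E'%:P).

Local Notation T := (('X + E%:P) * ('X + c%:P)).
Local Notation T' := (('X + E%:P) * ('X + E'%:P)).

Let Q2_mul_rest : Q2 * (U%:P * Q1 - D%:P * T) = S - (D * D')%:P * T'.
Proof.
transitivity (U%:P * (Q1 * Q2) - P * ('X + c%:P) * Q2); first by ring.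
by rewrite norm_eq cf_eq; ring.
Qed.

Let mul_Q1_eq : U%:P * Q1 = D%:P * T - (D * D')%:P.
Proof.
have [n rest_eq] : exists n : F, U%:P * Q1 - D%:P * T = n%:P.
  exists (U%:P * Q1 - D%:P * T)`_0; apply/size1_polyC/(size_monicM_le1 Q2_monic).
  rewrite Q2_mul_rest size_Q2 (leq_trans (size_polyD _ _)) // geq_max.
  rewrite (leq_trans size_S) //= size_polyN mul_polyC.
  rewrite (leq_trans (size_scale_leq _ _)) //.
  by rewrite size_monicM ?monic_neq0 ?monicXaddC // !size_XaddC.
have := congr1 (fun p : {poly F} => p`_2) Q2_mul_rest.
rewrite rest_eq coefMC coefB coefCM coef2_XaddC_mul (nth_default 0 size_S).
rewrite (monic_coef_size Q2_monic size_Q2) mul1r sub0r mulr1 => n_eq.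
by rewrite -[U%:P * Q1](subrK (D%:P * T)) rest_eq n_eq polyCN addrC.
Qed.

Lemma lead_norm_eq : U = D.
Proof.
have := congr1 (fun p : {poly F} => p`_2) mul_Q1_eq.
rewrite coefB !coefCM coefC coef2_XaddC_mul (monic_coef_size Q1_monic size_Q1).
by rewrite !mulr1 subr0.
Qed.

Lemma norm_defect_eq : (D * D')%:P * (T' - Q2) = S.
Proof.
have := Q2_mul_rest; rewrite mul_Q1_eq => Q2N.
by rewrite -[S](subrK ((D * D')%:P * T')) -Q2N; ring.
Qed.

Lemma norm_prev_eq : U != 0 -> Q1 = T - D'%:P.
Proof.
move=> U_neq0; apply: (mulfI (_ : U%:P != 0)); first by rewrite polyC_eq0.
by rewrite mul_Q1_eq lead_norm_eq; ring.
Qed.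

End ConsecutiveNorms.

Section ContinuedFraction.
Variables (F : fieldType) (f g v w : F) (u vs ws d e : int -> F).
Hypothesis u_neq0 : forall h, u h != 0.
Hypothesis hi : forall h, ident_i f g vs ws d e h.
Hypothesis hii : forall h, ident_ii f g (- (v%:P * ('X - w%:P))) u vs ws d e h.

Definition den (h : int) : {poly F} := 'X^2 - (vs h)%:P * 'X + (ws h)%:P.

Local Notation P j := ((d j)%:P * ('X + (e j)%:P)).
Local Notation A := (cubicA f g).

Lemma norm_den j :
  (- (u (j - 1) * u j))%:P * (den (j - 1) * den j)
    = P j * (P j + A) + v%:P * ('X - w%:P).
Proof.
have := hii (j - 1); rewrite /ident_ii subrK => norm_eq.
by rewrite /den; apply: etrans (etrans norm_eq _); ring.
Qed.

Lemma cf_next j :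
  P j + A = ('X + (vs j)%:P) * den j - (d (j + 1))%:P * ('X + (e (j + 1))%:P).
Proof. by rewrite /den -(hi j); ring. Qed.

Lemma cf_prev j :
  P j + A = ('X + (vs (j - 1))%:P) * den (j - 1) - (d (j - 1))%:P * ('X + (e (j - 1))%:P).
Proof.
have := hi (j - 1); rewrite /ident_i subrK => cf_eq.
by rewrite /den -cf_eq; ring.
Qed.

Lemma d_eq_u j : d j = - (u (j - 1) * u j).
Proof.
apply/esym/(lead_norm_eq (monic_quadratic _ _) (size_quadratic _ _) (monic_quadratic _ _) (size_quadratic _ _) (size_CM_XsubC _ _)).
  exact: norm_den.
exact: cf_next.
Qed.

Lemma d_neq0 j : d j != 0.
Proof. by rewrite d_eq_u oppr_eq0 mulf_neq0. Qed.

Lemma den_next_defect j :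
  (d j * d (j + 1))%:P * (('X + (e j)%:P) * ('X + (e (j + 1))%:P) - den j)
    = v%:P * ('X - w%:P).
Proof.
exact: (norm_defect_eq (monic_quadratic _ _) (size_quadratic _ _) (size_CM_XsubC _ _) (norm_den j) (cf_next j)).
Qed.

Lemma den_eq_prev j : den j = ('X + (e j)%:P) * ('X + (vs (j - 1))%:P) - (d (j - 1))%:P.
Proof.
have norm_eq := norm_den j; rewrite [den _ * _]mulrC in norm_eq.
apply: (norm_prev_eq (monic_quadratic _ _) (size_quadratic _ _) (monic_quadratic _ _) (size_quadratic _ _) (size_CM_XsubC _ _)
          norm_eq (cf_prev j)).
by rewrite oppr_eq0 mulf_neq0.
Qed.

Lemma den_horner_w j : (den j).[w] = (w + e j) * (w + e (j + 1)).
Proof.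
have := congr1 (horner^~ w) (den_next_defect j); rewrite !hornerE subrr mulr0.
by move/eqP; rewrite mulf_eq0 mulf_eq0 !(negPf (d_neq0 _)) /= subr_eq0 => /eqP <-.
Qed.

Lemma d_triple j : d (j - 1) * d j * d (j + 1) = - v * (w + e j).
Proof.
have := congr1 (horner^~ (- e j)) (den_next_defect j).
rewrite den_eq_prev !hornerE addNr mul0r => defect_eq.
by apply: etrans (etrans defect_eq _); ring.
Qed.

Lemma norm_horner_w j :
  (den (j - 1)).[w] * (den j).[w] = (w + e j) * (d j * (w + e j) + (w ^+ 3 + f * w + g)).
Proof.
have := congr1 (horner^~ w) (norm_den j); rewrite -d_eq_u.
move: (den (j - 1)) (den j) => Q' Q.
rewrite /cubicA !(hornerCM, hornerM, hornerD, hornerN, hornerX, hornerC) => norm_w.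
by apply: (mulfI (d_neq0 j)); rewrite norm_w; ring.
Qed.

End ContinuedFraction.

Theorem mainTheorem9 (F : fieldType)
    (hchar : (2%N \notin [pchar F]) /\ (3%N \notin [pchar F]))
    (f g v w : F) (u vs ws d e : int -> F)
    (hu : forall h : int, u h != 0)
    (hi : forall h : int, ident_i f g vs ws d e h)
    (hii : forall h : int, ident_ii f g (- (v%:P * ('X - w%:P))) u vs ws d e h) :
  forall h : int,
    d (h - 2) * d (h - 1) ^+ 2 * d h ^+ 3 * d (h + 1) ^+ 2 * d (h + 2)
      = - v ^+ 3 * ((g + d h * e h) + w * (f + d h) + w ^+ 3)
    /\ - v ^+ 3 * ((g + d h * e h) + w * (f + d h) + w ^+ 3)
      = v ^+ 2 * d (h - 1) * d h ^+ 2 * d (h + 1) - v ^+ 3 * (g + w * f + w ^+ 3).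
Proof.
move=> h; have triple := d_triple hu hi hii.
have triple_prev : d (h - 2) * d (h - 1) * d h = - v * (w + e (h - 1)).
  by have := triple (h - 1); rewrite subrK (_ : h - 1 - 1 = h - 2) //; ring.
have triple_next : d h * d (h + 1) * d (h + 2) = - v * (w + e (h + 1)).
  by have := triple (h + 1); rewrite addrK (_ : h + 1 + 1 = h + 2) //; ring.
have x_neq0 : w + e h != 0.
  apply/eqP => x_eq0; move: (triple h); rewrite x_eq0 mulr0 => /eqP.
  by rewrite !mulf_eq0 !(negPf (d_neq0 hu hi hii _)).
have triple_prod : (w + e (h - 1)) * (w + e h) * (w + e (h + 1))
                   = d h * (w + e h) + (w ^+ 3 + f * w + g).
  apply: (mulfI x_neq0).
  have := norm_horner_w hu hi hii h; rewrite !(den_horner_w hu hi hii) subrK => norm_w.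
  by rewrite -norm_w; ring.
split.
- transitivity ((d (h - 2) * d (h - 1) * d h) * (d (h - 1) * d h * d (h + 1))
                * (d h * d (h + 1) * d (h + 2))); first by ring.
  rewrite triple_prev triple triple_next.
  transitivity (- v ^+ 3 * ((w + e (h - 1)) * (w + e h) * (w + e (h + 1)))); first by ring.
  by rewrite triple_prod; ring.
- rewrite (_ : v ^+ 2 * _ * _ * _ = v ^+ 2 * d h * (d (h - 1) * d h * d (h + 1))); last by ring.
  by rewrite triple; ring.
Qed.
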